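(* Under the standing assumptions below (for both $k=l$ and $k=r$), let $f(p):=f_l(p)+f_r(p)+u_r-u_l$ for $p>0$, and let $I_k:=\displaystyle\int_0^{p_k}\frac{dq}{\hat\rho_k(q)\,c_k(q,\hat\rho_k(q))}\in(0,+\infty]$. Then there exists a unique $p^*\in(0,\infty)$ with $f(p^* )=0$ if and only if $$u_r-u_l<I_l+I_r.$$
   Context: For each $k\in\{l,r\}$: $\varGamma_k,h_k:(0,\infty)\to\mathbb R$ are twice continuously differentiable and satisfy (C1) $\varGamma_k'\le 0$, $(\rho\varGamma_k(\rho))'\ge 0$, $(\rho\varGamma_k(\rho))''\ge0$; (C2) $\lim_{\rho\to+\infty}\varGamma_k(\rho)=\varGamma_{k,\infty}>0$ and $\varGamma_k(\rho)\le\varGamma_{k,\infty}+2$ for all $\rho>0$; (C3) $h_k'\ge0$, $h_k''\ge0$. Equation of state $p=\varGamma_k(\rho)\rho e+h_k(\rho)$, i.e. $e_k(p,\rho)=\frac{p-h_k(\rho)}{\varGamma_k(\rho)\rho}$; sound speed $c_k(p,\rho)=\sqrt{\left(\frac1\rho+\frac{\varGamma_k'(\rho)}{\varGamma_k(\rho)}\right)(p-h_k(\rho))+\frac p\rho\varGamma_k(\rho)+h_k'(\rho)}$. Initial states $(\rho_l,u_l,p_l)$ and $(\rho_r,u_r,p_r)$ with $\rho_k>0$, $p_k>0$, $u_k\in\mathbb R$, $e_k(p_k,\rho_k)\ge0$. Hugoniot function $\varPhi_k(p,\rho):=\varGamma_k(\rho_k)\rho_k(p-h_k(\rho))-\varGamma_k(\rho)\rho(p_k-h_k(\rho_k))-\tfrac12\varGamma_k(\rho_k)(p+p_k)\varGamma_k(\rho)(\rho-\rho_k)$;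 $\rho_{k,\max}$ is the unique $\rho>\rho_k$ with $(\rho-\rho_k)\varGamma_k(\rho)=2\rho_k$; for $p>p_k$, $\rho_k^H(p)$ is the unique $\rho\in(\rho_k,\rho_{k,\max})$ with $\varPhi_k(p,\rho)=0$. $\hat\rho_k$ is the solution of $\frac{d\hat\rho}{dq}=\frac{1}{c_k(q,\hat\rho)^2}$, $\hat\rho(p_k)=\rho_k$, assumed to exist on $(0,p_k]$ with $\hat\rho_k(q)>0$ and $e_k(q,\hat\rho_k(q))\ge 0$ there. Define $f_k(p)=\int_{p_k}^{p}\frac{dq}{\hat\rho_k(q)c_k(q,\hat\rho_k(q))}$ for $0<p\le p_k$ and $f_k(p)=\left((p-p_k)\left(\frac1{\rho_k}-\frac1{\rho_k^H(p)}\right)\right)^{1/2}$ for $p>p_k$. *)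

From Stdlib Require Import Reals Lra Classical ClassicalEpsilon.
Open Scope R_scope.

(* Riemann integral of g from a to b (signed, Stdlib convention);
   0 if g is not Riemann integrable there (never used in that case). *)
Definition Rint (g : R -> R) (a b : R) : R :=
  match excluded_middle_informative (exists _ : Riemann_integrable g a b, True) with
  | left H => RiemannInt (proj1_sig (constructive_indefinite_description _ H))
  | right _ => 0
  end.

(* extended reals (only +infinity needed) *)
Inductive ERbar := Fin (r : R) | PInf.

Definition ER_plus (x y : ERbar) : ERbar :=
  match x, y with Fin a, Fin b => Fin (a + b) | _, _ => PInf end.

Definition R_lt_ER (x : R) (y : ERbar) : Prop :=
  match y with Fin b => x < b | PInf => True end.

Definition improper0_cv (g : R -> R) (b L : R) : Prop :=
  forall eps, 0 < eps -> exists delta, 0 < delta /\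
    forall a, 0 < a < delta -> Rabs (Rint g a b - L) < eps.

(* improper integral int_0^b g, in (-inf,+inf]: value of the limit if it
   converges, +infinity otherwise (the integrands here are positive) *)
Definition improper0 (g : R -> R) (b : R) : ERbar :=
  match excluded_middle_informative (exists L, improper0_cv g b L) with
  | left H => Fin (proj1_sig (constructive_indefinite_description _ H))
  | right _ => PInf
  end.

(* Equation of state data: Gamma, h with their first and second derivatives,
   and the limit Gamma_infinity. *)
Record EOS := mkEOS {
  Gam : R -> R; Gam1 : R -> R; Gam2 : R -> R;
  hh : R -> R; hh1 : R -> R; hh2 : R -> R;
  Ginf : R }.

Definition EOS_ok (E : EOS) : Prop :=
  (forall x, 0 < x ->
     derivable_pt_lim (Gam E) x (Gam1 E x) /\
     derivable_pt_lim (Gam1 E) x (Gam2 E x) /\ continuity_pt (Gam2 E) x /\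
     derivable_pt_lim (hh E) x (hh1 E x) /\
     derivable_pt_lim (hh1 E) x (hh2 E x) /\ continuity_pt (hh2 E) x) /\
  (* (C1) Gamma' <= 0, (rho Gamma)' >= 0, (rho Gamma)'' >= 0 *)
  (forall x, 0 < x ->
     Gam1 E x <= 0 /\
     0 <= Gam E x + x * Gam1 E x /\
     0 <= 2 * Gam1 E x + x * Gam2 E x) /\
  (forall eps, 0 < eps -> exists M, forall x, M < x -> Rabs (Gam E x - Ginf E) < eps) /\
  0 < Ginf E /\
  (forall x, 0 < x -> Gam E x <= Ginf E + 2) /\
  (forall x, 0 < x -> 0 <= hh1 E x /\ 0 <= hh2 E x).

Definition eint (E : EOS) (p rho : R) : R :=
  (p - hh E rho) / (Gam E rho * rho).

Definition csound (E : EOS) (p rho : R) : R :=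
  sqrt ((/ rho + Gam1 E rho / Gam E rho) * (p - hh E rho)
        + p / rho * Gam E rho + hh1 E rho).

Definition Hug (E : EOS) (rho0 p0 p rho : R) : R :=
  Gam E rho0 * rho0 * (p - hh E rho) - Gam E rho * rho * (p0 - hh E rho0)
  - / 2 * Gam E rho0 * (p + p0) * Gam E rho * (rho - rho0).

Definition side_ok (E : EOS) (rho0 p0 : R) (rhomax : R)
    (rhoH rhat : R -> R) : Prop :=
  0 < rho0 /\ 0 < p0 /\ 0 <= eint E p0 rho0 /\
  rho0 < rhomax /\ (rhomax - rho0) * Gam E rhomax = 2 * rho0 /\
  (forall r, rho0 < r -> (r - rho0) * Gam E r = 2 * rho0 -> r = rhomax) /\
  (forall p, p0 < p ->
     rho0 < rhoH p < rhomax /\ Hug E rho0 p0 p (rhoH p) = 0 /\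
     (forall r, rho0 < r < rhomax -> Hug E rho0 p0 p r = 0 -> r = rhoH p)) /\
  rhat p0 = rho0 /\
  (forall q, 0 < q < p0 ->
     derivable_pt_lim rhat q (/ (csound E q (rhat q)) ^ 2)) /\
  (forall eps, 0 < eps -> exists delta, 0 < delta /\
     forall q, p0 - delta < q <= p0 -> Rabs (rhat q - rho0) < eps) /\
  (forall q, 0 < q <= p0 -> 0 < rhat q /\ 0 <= eint E q (rhat q)).

Definition rar_integrand (E : EOS) (rhat : R -> R) (q : R) : R :=
  / (rhat q * csound E q (rhat q)).

Definition fk (E : EOS) (rho0 p0 : R) (rhoH rhat : R -> R) (p : R) : R :=
  if Rle_dec p p0 then Rint (rar_integrand E rhat) p0 p
  else sqrt ((p - p0) * (/ rho0 - / rhoH p)).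

(* Each wave function f_k is a strictly increasing, continuous function on
   (0,oo), unbounded above, whose infimum -I_k is not attained.  On (0,p_k]
   this is the monotonicity of an integral with positive integrand, I_k being
   its limit at 0+.  On (p_k,oo) it is the monotonicity of rho^H: the
   Hugoniot function is affine in p with positive slope on (rho_k,rho_max),
   so rho^H is the inverse of the continuous map rho |-> p solving
   Phi(p,rho) = 0, hence increasing and continuous.  Consequently f is
   strictly increasing, continuous and unbounded above, with non-attained
   infimum u_r - u_l - I_l - I_r, and it has a zero -- necessarily unique --
   exactly when that infimum is negative. *)

From Stdlib Require Import Reals Lra Classical ClassicalEpsilon.
From Coquelicot Require Import Coquelicot.
Open Scope R_scope.

Lemma continuity_pt_eps (f : R -> R) x :
  continuity_pt f x <->
  forall eps, 0 < eps -> exists d, 0 < d /\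
    forall y, Rabs (y - x) < d -> Rabs (f y - f x) < eps.
Proof.
  rewrite continuity_pt_locally. split.
  - intros H eps Heps. destruct (H (mkposreal eps Heps)) as [d Hd].
    exists d. split; [apply cond_pos | exact Hd].
  - intros H eps. destruct (H eps (cond_pos eps)) as [d [Hd0 Hd]].
    exists (mkposreal d Hd0). exact Hd.
Qed.

Lemma continuity_pt_Rmin_l b x : continuity_pt (fun y => Rmin y b) x.
Proof.
  apply continuity_pt_eps. intros eps Heps. exists eps. split; [exact Heps|].
  intros y Hy. apply Rabs_def2 in Hy. apply Rabs_def1;
  unfold Rmin; destruct (Rle_dec y b), (Rle_dec x b); lra.
Qed.

Lemma continuity_pt_squeeze_right (f g h : R -> R) x d : 0 < d ->
  (forall y, x - d < y <= x -> f y = g y) ->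
  (forall y, x < y -> g x <= f y <= h y) ->
  continuity_pt g x -> continuity_pt h x -> h x = g x ->
  continuity_pt f x.
Proof.
  intros Hd Hleft Hright Hg Hh Hhg.
  rewrite continuity_pt_eps in Hg, Hh |- *. intros eps Heps.
  destruct (Hg eps Heps) as [dg [Hdg Hg']]. destruct (Hh eps Heps) as [dh [Hdh Hh']].
  exists (Rmin d (Rmin dg dh)). split; [repeat apply Rmin_pos; lra|].
  assert (Hm1 := Rmin_l d (Rmin dg dh)). assert (Hm2 := Rmin_r d (Rmin dg dh)).
  assert (Hm3 := Rmin_l dg dh). assert (Hm4 := Rmin_r dg dh).
  intros y Hy. rewrite (Hleft x) by lra. apply Rabs_def2 in Hy.
  destruct (Rle_or_lt y x) as [Hyx | Hyx].
  - rewrite (Hleft y) by lra. apply Hg'. apply Rabs_def1; lra.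
  - destruct (Hright y Hyx) as [H1 H2].
    assert (Hhy := Hh' y ltac:(apply Rabs_def1; lra)). apply Rabs_def2 in Hhy.
    apply Rabs_def1; lra.
Qed.

Lemma IVT_open (f : R -> R) a b y : a < b ->
  (forall x, a <= x <= b -> continuity_pt f x) -> f a < y < f b ->
  exists c, a < c < b /\ f c = y.
Proof.
  intros Hab Hc Hy.
  destruct (Ranalysis5.IVT_interv (fun x => f x - y) a b) as [c [Hc1 Hc2]];
    [| exact Hab | lra | lra |].
  - intros x Hx. apply continuity_pt_minus; [now apply Hc | apply continuity_pt_const].
    now intros u v.
  - exists c. destruct (Req_dec c a); destruct (Req_dec c b); subst; split; lra.
Qed.

Lemma nondecreasing_of_derive (F F' : R -> R) a :
  (forall x, a < x -> derivable_pt_lim F x (F' x)) ->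
  (forall x, a < x -> 0 <= F' x) ->
  forall x y, a < x -> x <= y -> F x <= F y.
Proof.
  intros Hd Hp x y Hx Hxy.
  destruct (Rle_lt_or_eq_dec _ _ Hxy) as [Hlt | <-]; [| lra].
  destruct (MVT_cor2 F F' x y Hlt) as [c [Hc1 Hc2]].
  - intros c Hc. apply Hd. lra.
  - assert (0 <= F' c) by (apply Hp; lra). nra.
Qed.

Definition lim_right0 (D : R -> R) (L : R) : Prop :=
  forall eps, 0 < eps -> exists d, 0 < d /\
    forall a, 0 < a < d -> Rabs (D a - L) < eps.

Section DecreasingLimitAt0.
Variables (D : R -> R) (b : R).
Hypothesis D_decr : forall x y, 0 < x -> x < y <= b -> D y < D x.

Lemma lim_right0_decr_lt L : lim_right0 D L -> forall p, 0 < p <= b -> D p < L.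
Proof.
  intros HL p Hp. apply Rnot_le_lt. intro HLp.
  assert (Hhalf : D p < D (p / 2)) by (apply D_decr; lra).
  destruct (HL (D (p / 2) - D p)) as [d [Hd Hdd]]; [lra|].
  set (a := Rmin (p / 2) d / 2).
  assert (Hm1 := Rmin_l (p / 2) d). assert (Hm2 := Rmin_r (p / 2) d).
  assert (Hm0 : 0 < Rmin (p / 2) d) by (apply Rmin_pos; lra).
  assert (Ha : D (p / 2) < D a) by (apply D_decr; unfold a; lra).
  specialize (Hdd a ltac:(unfold a; lra)). apply Rabs_def2 in Hdd. lra.
Qed.

(* The limit is the supremum of [D] over (0,b]. *)
Lemma decr_bounded_lim_right0 M : 0 < b ->
  (forall a, 0 < a <= b -> D a <= M) -> exists L, lim_right0 D L.
Proof.
  intros Hb HM.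
  set (Dvals := fun x => exists a, 0 < a <= b /\ x = D a).
  destruct (completeness Dvals) as [L [HLub HLleast]].
  - exists M. intros x [a [Ha ->]]. now apply HM.
  - exists (D b). exists b. split; [lra | reflexivity].
  - exists L. intros eps Heps.
    destruct (classic (exists a, 0 < a <= b /\ L - eps < D a)) as [[a1 [Ha1 Hlt]] | Hno].
    + exists a1. split; [lra|]. intros a Ha.
      assert (D a1 < D a) by (apply D_decr; lra).
      assert (D a <= L) by (apply HLub; exists a; split; [lra | reflexivity]).
      apply Rabs_def1; lra.
    + exfalso. assert (L <= L - eps); [| lra].
      apply HLleast. intros x [a [Ha ->]]. apply Rnot_lt_le. intro Hlt.
      apply Hno. now exists a.
Qed.

End DecreasingLimitAt0.

Ltac solve_continuity :=
  repeat first
    [ assumption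
    | match goal with
      | |- continuity_pt (fun _ => ?c) _ => apply continuity_pt_const; intros ? ?; reflexivity
      | |- continuity_pt (fun x => x) _ => apply continuity_pt_id
      | |- continuity_pt (fun x => @?a x + @?b x) _ => apply (continuity_pt_plus a b)
      | |- continuity_pt (fun x => @?a x - @?b x) _ => apply (continuity_pt_minus a b)
      | |- continuity_pt (fun x => @?a x * @?b x) _ => apply (continuity_pt_mult a b)
      | |- continuity_pt (fun x => @?a x / @?b x) _ => apply (continuity_pt_div a b)
      | |- continuity_pt (fun x => / @?a x) _ => apply (continuity_pt_inv a)
      | |- continuity_pt (fun x => ?g (@?a x)) _ => apply (continuity_pt_comp a g)
      end ].

Section EquationOfState.
Variable E : EOS.
Hypothesis HE : EOS_ok E.

Lemma Gam_cont x : 0 < x -> continuity_pt (Gam E) x.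
Proof. intro Hx. apply derivable_continuous_pt. exists (Gam1 E x). apply HE, Hx. Qed.

Lemma Gam1_cont x : 0 < x -> continuity_pt (Gam1 E) x.
Proof. intro Hx. apply derivable_continuous_pt. exists (Gam2 E x). apply HE, Hx. Qed.

Lemma hh_cont x : 0 < x -> continuity_pt (hh E) x.
Proof. intro Hx. apply derivable_continuous_pt. exists (hh1 E x). apply HE, Hx. Qed.

Lemma hh1_cont x : 0 < x -> continuity_pt (hh1 E) x.
Proof. intro Hx. apply derivable_continuous_pt. exists (hh2 E x). apply HE, Hx. Qed.

Lemma Gam_nonincreasing x y : 0 < x -> x <= y -> Gam E y <= Gam E x.
Proof.
  intros Hx Hxy.
  cut (- Gam E x <= - Gam E y); [lra|].
  apply (nondecreasing_of_derive (fun z => - Gam E z) (fun z => - Gam1 E z) 0);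
    [| | exact Hx | exact Hxy].
  - intros z Hz. apply derivable_pt_lim_opp. apply HE, Hz.
  - intros z Hz. destruct HE as [_ [HC1 _]]. destruct (HC1 z Hz). lra.
Qed.

Lemma Gam_ge_Ginf x : 0 < x -> Ginf E <= Gam E x.
Proof.
  intro Hx. destruct HE as [_ [_ [Hlim _]]].
  apply Rnot_lt_le. intro Hlt.
  destruct (Hlim (Ginf E - Gam E x)) as [M HM]; [lra|].
  set (y := Rmax x M + 1).
  assert (Hy1 : x < y) by (unfold y; generalize (Rmax_l x M); lra).
  assert (Hy2 : M < y) by (unfold y; generalize (Rmax_r x M); lra).
  specialize (HM y Hy2). apply Rabs_def2 in HM.
  assert (Gam E y <= Gam E x) by (apply Gam_nonincreasing; lra).
  lra.
Qed.

Lemma Gam_pos x : 0 < x -> 0 < Gam E x.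
Proof. intro Hx. generalize (Gam_ge_Ginf x Hx). destruct HE as [_ [_ [_ [Hpos _]]]]. lra. Qed.

(* The derivative Gam + (x - r0) Gam' = (x Gam)' - r0 Gam' is nonnegative by (C1). *)
Lemma Gam_shift_nondecreasing r0 x y : 0 <= r0 -> 0 < x -> x <= y ->
  (x - r0) * Gam E x <= (y - r0) * Gam E y.
Proof.
  intros Hr0 Hx Hxy.
  apply (nondecreasing_of_derive (fun z => (z - r0) * Gam E z)
           (fun z => Gam E z + (z - r0) * Gam1 E z) 0); [| | exact Hx | exact Hxy].
  - intros z Hz. apply is_derive_Reals.
    evar (d : R). replace (Gam E z + (z - r0) * Gam1 E z) with d.
    + apply (is_derive_mult (fun t : R => t - r0) (Gam E)).
      * auto_derive; auto.
      * apply is_derive_Reals, HE, Hz.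
      * intros; apply Rmult_comm.
    + unfold d; simpl. unfold plus, mult; simpl. ring.
  - intros z Hz. destruct HE as [_ [HC1 _]]. destruct (HC1 z Hz) as [H1 [H2 _]]. nra.
Qed.

Lemma csound_radicand_pos q rho : 0 < q -> 0 < rho -> 0 <= eint E q rho ->
  0 < (/ rho + Gam1 E rho / Gam E rho) * (q - hh E rho)
      + q / rho * Gam E rho + hh1 E rho.
Proof.
  intros Hq Hrho He.
  assert (HG := Gam_pos rho Hrho).
  destruct HE as [_ [HC1 [_ [_ [_ HC3]]]]].
  destruct (HC1 rho Hrho) as [_ [HrhoG _]]. destruct (HC3 rho Hrho) as [Hh1 _].
  unfold eint in He.
  assert (Hqh : 0 <= q - hh E rho).
  { replace (q - hh E rho) with ((q - hh E rho) / (Gam E rho * rho) * (Gam E rho * rho))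
      by (field; lra).
    apply Rmult_le_pos; nra. }
  assert (Hcoef : 0 <= / rho + Gam1 E rho / Gam E rho).
  { replace (/ rho + Gam1 E rho / Gam E rho)
      with ((Gam E rho + rho * Gam1 E rho) * / (rho * Gam E rho)) by (field; lra).
    apply Rmult_le_pos; [lra|]. left. apply Rinv_0_lt_compat. nra. }
  assert (0 < q / rho * Gam E rho).
  { apply Rmult_lt_0_compat; [apply Rdiv_lt_0_compat|]; lra. }
  nra.
Qed.

Lemma csound_pos q rho : 0 < q -> 0 < rho -> 0 <= eint E q rho -> 0 < csound E q rho.
Proof. intros. apply sqrt_lt_R0, csound_radicand_pos; assumption. Qed.

End EquationOfState.

Section MonotoneInverse.
Variables (P rH : R -> R) (r0 r1 p0 : R).
Hypothesis P_cont : forall r, r0 <= r < r1 -> continuity_pt P r.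
Hypothesis P_r0 : P r0 = p0.
Hypothesis rH_spec : forall p, p0 < p ->
  r0 < rH p < r1 /\ P (rH p) = p /\ (forall r, r0 < r < r1 -> P r = p -> r = rH p).

Lemma P_lt_below_rH p r : p0 < p -> r0 < r < rH p -> P r < p.
Proof.
  intros Hp Hr. destruct (rH_spec p Hp) as [HrH [_ Huniq]].
  apply Rnot_le_lt. intro Hle. destruct (Rle_lt_or_eq_dec _ _ Hle) as [Hlt | Heq].
  - destruct (IVT_open P r0 r p) as [c [Hc HPc]]; [lra | | lra |].
    + intros x Hx. apply P_cont. lra.
    + assert (c = rH p) by (apply Huniq; lra). lra.
  - assert (r = rH p) by (apply Huniq; lra). lra.
Qed.

Lemma P_gt_above_rH p q r : p0 < p -> p < q -> rH p < r < rH q -> p < P r.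
Proof.
  intros Hp Hpq Hr. destruct (rH_spec p Hp) as [HrH [_ Huniq]].
  destruct (rH_spec q ltac:(lra)) as [HrHq [HPq _]].
  apply Rnot_le_lt. intro Hle. destruct (Rle_lt_or_eq_dec _ _ Hle) as [Hlt | Heq].
  - destruct (IVT_open P r (rH q) p) as [c [Hc HPc]]; [lra | | lra |].
    + intros x Hx. apply P_cont. lra.
    + assert (c = rH p) by (apply Huniq; lra). lra.
  - assert (r = rH p) by (apply Huniq; lra). lra.
Qed.

Lemma rH_incr p q : p0 < p -> p < q -> rH p < rH q.
Proof.
  intros Hp Hpq. destruct (rH_spec q ltac:(lra)) as [HrHq [HPq _]].
  destruct (rH_spec p Hp) as [_ [HPp _]].
  destruct (Rtotal_order (rH p) (rH q)) as [Hlt | [Heq | Hgt]]; [exact Hlt | |].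
  - rewrite <- HPp, <- HPq, Heq in Hpq. lra.
  - assert (P (rH q) < p) by (apply P_lt_below_rH; lra). lra.
Qed.

Lemma rH_cont p : p0 < p -> continuity_pt rH p.
Proof.
  intro Hp. destruct (rH_spec p Hp) as [HrH _].
  assert (Hnext : rH p < rH (p + 1)) by (apply rH_incr; lra).
  apply continuity_pt_eps. intros eps Heps.
  set (lo := rH p - Rmin eps (rH p - r0) / 2).
  set (hi := rH p + Rmin eps (rH (p + 1) - rH p) / 2).
  assert (Hm1 := Rmin_l eps (rH p - r0)). assert (Hm2 := Rmin_r eps (rH p - r0)).
  assert (Hm3 := Rmin_l eps (rH (p + 1) - rH p)).
  assert (Hm4 := Rmin_r eps (rH (p + 1) - rH p)).
  assert (Hm0 : 0 < Rmin eps (rH p - r0)) by (apply Rmin_pos; lra).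
  assert (Hm0' : 0 < Rmin eps (rH (p + 1) - rH p)) by (apply Rmin_pos; lra).
  assert (Hlo : P lo < p) by (apply P_lt_below_rH; unfold lo; lra).
  assert (Hhi : p < P hi) by (apply (P_gt_above_rH p (p + 1)); unfold hi; lra).
  (* rH maps (P lo, P hi) into (lo, hi). *)
  exists (Rmin (p - p0) (Rmin (p - P lo) (P hi - p))).
  assert (Hk1 := Rmin_l (p - p0) (Rmin (p - P lo) (P hi - p))).
  assert (Hk2 := Rmin_r (p - p0) (Rmin (p - P lo) (P hi - p))).
  assert (Hk3 := Rmin_l (p - P lo) (P hi - p)). assert (Hk4 := Rmin_r (p - P lo) (P hi - p)).
  split; [repeat apply Rmin_pos; lra|].
  intros y Hy. apply Rabs_def2 in Hy.
  destruct (rH_spec y ltac:(lra)) as [HrHy [HPy _]].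
  assert (Hylo : lo < rH y).
  { apply Rnot_le_lt. intro Hle. destruct (Rle_lt_or_eq_dec _ _ Hle) as [Hlt | Heq].
    - destruct (Rlt_or_le y p) as [Hyp | Hpy].
      + assert (y < P lo) by (apply (P_gt_above_rH y p); unfold lo in *; lra). lra.
      + destruct (Rle_lt_or_eq_dec _ _ Hpy) as [Hpy' | <-].
        * assert (rH p < rH y) by (apply rH_incr; lra). unfold lo in *; lra.
        * unfold lo in *; lra.
    - rewrite Heq in HPy. lra. }
  assert (Hyhi : rH y < hi).
  { apply Rnot_le_lt. intro Hle. destruct (Rle_lt_or_eq_dec _ _ Hle) as [Hlt | Heq].
    - assert (P hi < y) by (apply P_lt_below_rH; unfold hi in *; lra). lra.
    - rewrite <- Heq in HPy. lra. }
  apply Rabs_def1; unfold lo, hi in *; lra.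
Qed.

End MonotoneInverse.

Record wave_function (h : R -> R) (I : ERbar) : Prop := {
  wave_incr : forall x y, 0 < x -> x < y -> h x < h y;
  wave_cont : forall x, 0 < x -> continuity_pt h x;
  wave_unbounded : forall M, exists p, 0 < p /\ M < h p;
  wave_lower : forall p, 0 < p -> R_lt_ER (- h p) I;
  wave_inf : forall M, R_lt_ER (- M) I -> exists a, 0 < a /\ h a < M }.

Section Side.
Variable E : EOS.
Hypothesis HE : EOS_ok E.
Variables (rho0 p0 rmax : R) (rhoH rhat : R -> R).
Hypothesis HS : side_ok E rho0 p0 rmax rhoH rhat.

Lemma rho0_pos : 0 < rho0.
Proof. apply HS. Qed.

Lemma p0_pos : 0 < p0.
Proof. apply HS. Qed.

Definition hug_slope r :=
  Gam E rho0 * rho0 - / 2 * Gam E rho0 * Gam E r * (r - rho0).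
Definition hug_offset r :=
  Gam E rho0 * rho0 * hh E r + Gam E r * r * (p0 - hh E rho0)
  + / 2 * Gam E rho0 * p0 * Gam E r * (r - rho0).
Definition hug_pressure r := hug_offset r / hug_slope r.

Lemma Hug_affine p r : Hug E rho0 p0 p r = hug_slope r * p - hug_offset r.
Proof. unfold Hug, hug_slope, hug_offset. ring. Qed.

(* The slope vanishes exactly where (r - rho0) Gam r = 2 rho0, i.e. at rho_max. *)
Lemma hug_slope_pos r : rho0 <= r < rmax -> 0 < hug_slope r.
Proof.
  intro Hr. assert (H0 := rho0_pos).
  destruct HS as [_ [_ [_ [Hm [Hmeq [Hmuniq _]]]]]].
  assert (HG0 : 0 < Gam E rho0) by (apply Gam_pos; auto).
  assert (Hbelow : (r - rho0) * Gam E r < 2 * rho0).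
  { destruct (Rle_lt_or_eq_dec _ _ (proj1 Hr)) as [Hlt | <-]; [| lra].
    assert (Hle := Gam_shift_nondecreasing E HE rho0 r rmax ltac:(lra) ltac:(lra) ltac:(lra)).
    destruct (Rle_lt_or_eq_dec _ _ Hle) as [Hlt' | Heq]; [lra|].
    assert (r = rmax) by (apply Hmuniq; lra). lra. }
  unfold hug_slope. nra.
Qed.

Lemma hug_pressure_cont r : rho0 <= r < rmax -> continuity_pt hug_pressure r.
Proof.
  intro Hr. assert (H0 := rho0_pos).
  assert (HA := hug_slope_pos r Hr).
  assert (Hc1 := Gam_cont E HE r ltac:(lra)). assert (Hc2 := hh_cont E HE r ltac:(lra)).
  unfold hug_pressure, hug_slope, hug_offset. solve_continuity.
  unfold hug_slope in HA; lra.
Qed.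

Lemma hug_pressure_rho0 : hug_pressure rho0 = p0.
Proof.
  assert (H0 := rho0_pos). assert (HG0 : 0 < Gam E rho0) by (apply Gam_pos; auto).
  unfold hug_pressure, hug_slope, hug_offset. field. intro Hc; ring_simplify in Hc. nra.
Qed.

Lemma rhoH_spec p : p0 < p ->
  rho0 < rhoH p < rmax /\ hug_pressure (rhoH p) = p /\
  (forall r, rho0 < r < rmax -> hug_pressure r = p -> r = rhoH p).
Proof.
  intro Hp. destruct HS as [_ [_ [_ [_ [_ [_ [HH _]]]]]]].
  destruct (HH p Hp) as [Hr [Hz Huniq]]. split; [exact Hr|].
  assert (HA := hug_slope_pos (rhoH p) ltac:(lra)).
  rewrite Hug_affine in Hz. unfold hug_pressure. split.
  - apply (Rmult_eq_reg_l (hug_slope (rhoH p))); [field_simplify; lra | lra].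
  - intros r Hr' HP. apply Huniq; [exact Hr'|]. rewrite Hug_affine, <- HP.
    assert (0 < hug_slope r) by (apply hug_slope_pos; lra). field. lra.
Qed.

Lemma rhoH_gt p : p0 < p -> rho0 < rhoH p.
Proof. intro Hp. apply (rhoH_spec p Hp). Qed.

Lemma rhoH_incr : forall p q, p0 < p -> p < q -> rhoH p < rhoH q.
Proof. exact (rH_incr _ _ _ _ _ hug_pressure_cont hug_pressure_rho0 rhoH_spec). Qed.

Lemma rhoH_cont : forall p, p0 < p -> continuity_pt rhoH p.
Proof. exact (rH_cont _ _ _ _ _ hug_pressure_cont hug_pressure_rho0 rhoH_spec). Qed.

Definition shock_branch p := sqrt ((p - p0) * (/ rho0 - / rhoH p)).

Lemma shock_inv_jump_pos p : p0 < p -> 0 < / rho0 - / rhoH p.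
Proof.
  intro Hp. assert (H0 := rho0_pos). assert (H1 := rhoH_gt p Hp).
  assert (/ rhoH p < / rho0) by (apply Rinv_lt_contravar; nra). lra.
Qed.

Lemma shock_branch_pos p : p0 < p -> 0 < shock_branch p.
Proof.
  intro Hp. apply sqrt_lt_R0, Rmult_lt_0_compat; [lra | now apply shock_inv_jump_pos].
Qed.

Lemma shock_branch_incr x y : p0 < x -> x < y -> shock_branch x < shock_branch y.
Proof.
  intros Hx Hy. assert (H0 := rho0_pos).
  assert (H1 := shock_inv_jump_pos x Hx). assert (H2 := rhoH_gt x Hx).
  assert (H3 := rhoH_incr x y Hx Hy).
  assert (/ rhoH y < / rhoH x) by (apply Rinv_lt_contravar; nra).
  apply sqrt_lt_1; nra.
Qed.

Lemma shock_branch_cont x : p0 < x -> continuity_pt shock_branch x.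
Proof.
  intro Hx. assert (H0 := rho0_pos).
  assert (H1 := shock_inv_jump_pos x Hx). assert (H2 := rhoH_gt x Hx).
  assert (Hc := rhoH_cont x Hx).
  unfold shock_branch. solve_continuity.
  all: first [apply continuity_pt_sqrt; nra | lra].
Qed.

Lemma shock_branch_le p : p0 < p -> shock_branch p <= sqrt ((p - p0) / rho0).
Proof.
  intro Hp. assert (H0 := rho0_pos). assert (H1 := rhoH_gt p Hp).
  assert (0 < / rhoH p) by (apply Rinv_0_lt_compat; lra).
  apply sqrt_le_1_alt. unfold Rdiv. nra.
Qed.

Lemma shock_branch_unbounded M : exists p, p0 < p /\ M < shock_branch p.
Proof.
  assert (H0 := rho0_pos).
  set (c := / rho0 - / rhoH (p0 + 1)).
  assert (Hc : 0 < c) by (apply shock_inv_jump_pos; lra).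
  set (p := p0 + 1 + (M * M + 1) / c).
  assert (Hq : 0 < (M * M + 1) / c) by (apply Rdiv_lt_0_compat; nra).
  assert (Hk : (M * M + 1) / c * c = M * M + 1) by (field; lra).
  exists p. split; [unfold p; lra|].
  assert (Hjump : c <= / rho0 - / rhoH p).
  { assert (H1 := rhoH_incr (p0 + 1) p ltac:(lra) ltac:(unfold p; lra)).
    assert (H2 := rhoH_gt (p0 + 1) ltac:(lra)).
    assert (/ rhoH p < / rhoH (p0 + 1)) by (apply Rinv_lt_contravar; nra).
    unfold c; lra. }
  assert (Hsq : M * M < (p - p0) * (/ rho0 - / rhoH p)).
  { assert ((p - p0) * c <= (p - p0) * (/ rho0 - / rhoH p))
      by (apply Rmult_le_compat_l; [unfold p; lra | exact Hjump]).
    unfold p in *; nra. }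
  apply Rle_lt_trans with (Rabs M); [apply Rle_abs|].
  rewrite <- sqrt_Rsqr_abs. apply sqrt_lt_1; [apply Rle_0_sqr | nra | exact Hsq].
Qed.

(* Extended by its value at p0 beyond p0, to be continuous on all of (0,oo). *)
Definition rar_ext x := rar_integrand E rhat (Rmin x p0).

Lemma Rmin_p0_in x : 0 < x -> 0 < Rmin x p0 <= p0.
Proof.
  intro Hx. assert (H := p0_pos). unfold Rmin. destruct (Rle_dec x p0); lra.
Qed.

Lemma rhat_state x : 0 < x -> 0 < rhat (Rmin x p0) /\ 0 <= eint E (Rmin x p0) (rhat (Rmin x p0)).
Proof. intro Hx. apply HS, Rmin_p0_in, Hx. Qed.

Lemma rhat_Rmin_cont x : 0 < x -> continuity_pt (fun y => rhat (Rmin y p0)) x.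
Proof.
  intro Hx. destruct HS as [_ [_ [_ [_ [_ [_ [_ [Hr0 [Hrd [Hrc _]]]]]]]]]].
  destruct (Rlt_or_le x p0) as [Hlt | Hge].
  - apply (continuity_pt_locally_ext rhat _ (p0 - x)); [lra | |].
    + intros y Hy. unfold Rdist in Hy. apply Rabs_def2 in Hy.
      rewrite Rmin_left; [reflexivity | lra].
    + apply derivable_continuous_pt. eexists. apply Hrd. lra.
  - apply continuity_pt_eps. intros eps Heps.
    destruct (Hrc eps Heps) as [d [Hd Hdd]]. exists d. split; [exact Hd|].
    intros y Hy. apply Rabs_def2 in Hy. rewrite (Rmin_right x) by lra. rewrite Hr0.
    unfold Rmin. destruct (Rle_dec y p0).
    + apply Hdd. lra.
    + rewrite Hr0, Rminus_diag, Rabs_R0. exact Heps.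
Qed.

Lemma rar_ext_pos x : 0 < x -> 0 < rar_ext x.
Proof.
  intro Hx. destruct (rhat_state x Hx) as [Hr He]. destruct (Rmin_p0_in x Hx).
  assert (Hc := csound_pos E HE (Rmin x p0) _ ltac:(lra) Hr He).
  apply Rinv_0_lt_compat, Rmult_lt_0_compat; assumption.
Qed.

Lemma rar_ext_cont x : 0 < x -> continuity_pt rar_ext x.
Proof.
  intro Hx. destruct (rhat_state x Hx) as [Hr He]. destruct (Rmin_p0_in x Hx).
  assert (Hrad := csound_radicand_pos E HE (Rmin x p0) _ ltac:(lra) Hr He).
  assert (Hc := csound_pos E HE (Rmin x p0) _ ltac:(lra) Hr He).
  assert (HG := Gam_pos E HE _ Hr).
  assert (Hrho := rhat_Rmin_cont x Hx). assert (Hmin := continuity_pt_Rmin_l p0 x).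
  assert (Hc1 := Gam_cont E HE _ Hr). assert (Hc2 := Gam1_cont E HE _ Hr).
  assert (Hc3 := hh_cont E HE _ Hr). assert (Hc4 := hh1_cont E HE _ Hr).
  change rar_ext with (fun y => / (rhat (Rmin y p0) * csound E (Rmin y p0) (rhat (Rmin y p0)))).
  unfold csound. solve_continuity.
  all: first [ apply continuity_pt_sqrt; lra
             | unfold csound in Hc; apply Rgt_not_eq, Rmult_lt_0_compat; assumption
             | lra ].
Qed.

Lemma rar_ext_integrable a b : 0 < a -> 0 < b -> ex_RInt rar_ext a b.
Proof.
  intros Ha Hb. apply (@ex_RInt_continuous R_CompleteNormedModule). intros z Hz.
  apply continuity_pt_filterlim, rar_ext_cont.
  assert (0 < Rmin a b) by (apply Rmin_pos; auto). lra.
Qed.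

Definition rar_branch x := RInt rar_ext p0 x.

Lemma rar_branch_derive x : 0 < x -> is_derive rar_branch x (rar_ext x).
Proof.
  intro Hx. apply (is_derive_RInt rar_ext rar_branch p0 x).
  - assert (Hx2 : 0 < x / 2) by lra. exists (mkposreal _ Hx2). intros y Hy.
    apply (@RInt_correct R_CompleteNormedModule), rar_ext_integrable; [apply p0_pos|].
    change (Rabs (y - x) < x / 2) in Hy. apply Rabs_def2 in Hy. lra.
  - apply continuity_pt_filterlim, rar_ext_cont, Hx.
Qed.

Lemma rar_branch_incr x y : 0 < x -> x < y -> rar_branch x < rar_branch y.
Proof.
  intros Hx Hxy. apply (incr_function rar_branch 0 p_infty rar_ext); simpl; auto.
  - intros z Hz _. now apply rar_branch_derive.
  - intros z Hz _. now apply rar_ext_pos.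
Qed.

Lemma rar_branch_cont x : 0 < x -> continuity_pt rar_branch x.
Proof.
  intro Hx. apply derivable_continuous_pt. exists (rar_ext x).
  apply is_derive_Reals, rar_branch_derive, Hx.
Qed.

Lemma rar_branch_p0 : rar_branch p0 = 0.
Proof. unfold rar_branch. now rewrite RInt_point. Qed.

Lemma Rint_rar_integrand a b : 0 < a <= p0 -> 0 < b <= p0 ->
  Rint (rar_integrand E rhat) a b = RInt rar_ext a b.
Proof.
  intros Ha Hb.
  assert (Hagree : forall x, Rmin a b < x < Rmax a b -> rar_ext x = rar_integrand E rhat x).
  { intros x Hx. unfold rar_ext. rewrite Rmin_left; [reflexivity|].
    assert (Rmax a b <= p0) by (apply Rmax_lub; lra). lra. }
  assert (Hex : ex_RInt (rar_integrand E rhat) a b)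
    by (apply (ex_RInt_ext rar_ext); [exact Hagree | apply rar_ext_integrable; lra]).
  unfold Rint. destruct (excluded_middle_informative _) as [Hpr | Hnpr].
  - rewrite <- RInt_Reals. symmetry. apply RInt_ext. exact Hagree.
  - exfalso. apply Hnpr. now exists (ex_RInt_Reals_0 _ _ _ Hex).
Qed.

Let fk_side := fk E rho0 p0 rhoH rhat.

Lemma fk_le p : 0 < p <= p0 -> fk_side p = rar_branch p.
Proof.
  intro Hp. unfold fk_side, fk. destruct (Rle_dec p p0); [| lra].
  apply Rint_rar_integrand; lra.
Qed.

Lemma fk_gt p : p0 < p -> fk_side p = shock_branch p.
Proof. intro Hp. unfold fk_side, fk. destruct (Rle_dec p p0); [lra | reflexivity]. Qed.

Lemma Rint_rar_to_p0 a : 0 < a <= p0 -> Rint (rar_integrand E rhat) a p0 = - fk_side a.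
Proof.
  intro Ha. rewrite Rint_rar_integrand, fk_le by (assumption || lra).
  unfold rar_branch. rewrite <- (opp_RInt_swap rar_ext p0 a); [reflexivity|].
  apply rar_ext_integrable; lra.
Qed.

Lemma fk_incr x y : 0 < x -> x < y -> fk_side x < fk_side y.
Proof.
  intros Hx Hxy. destruct (Rle_or_lt y p0) as [Hy | Hy].
  - rewrite !fk_le by lra. now apply rar_branch_incr.
  - rewrite (fk_gt y Hy). destruct (Rle_or_lt x p0) as [Hx' | Hx'].
    + rewrite fk_le by lra. assert (rar_branch x <= rar_branch p0).
      { destruct (Rle_lt_or_eq_dec _ _ Hx') as [Hlt | ->]; [| lra].
        left. now apply rar_branch_incr. }
      generalize (shock_branch_pos y Hy). rewrite rar_branch_p0 in *. lra.
    + rewrite fk_gt by exact Hx'. now apply shock_branch_incr.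
Qed.

Lemma fk_cont x : 0 < x -> continuity_pt fk_side x.
Proof.
  intro Hx. destruct (Rtotal_order x p0) as [Hlt | [-> | Hgt]].
  - apply (continuity_pt_locally_ext rar_branch _ (Rmin x (p0 - x))).
    + apply Rmin_pos; lra.
    + intros y Hy. unfold Rdist in Hy. apply Rabs_def2 in Hy.
      generalize (Rmin_l x (p0 - x)) (Rmin_r x (p0 - x)). intros.
      symmetry. apply fk_le. lra.
    + now apply rar_branch_cont.
  - assert (H0 := rho0_pos).
    apply (continuity_pt_squeeze_right _ rar_branch (fun y => sqrt ((y - p0) / rho0)) p0 p0).
    + exact Hx.
    + intros y Hy. apply fk_le. lra.
    + intros y Hy. rewrite fk_gt, rar_branch_p0 by exact Hy.
      split; [left; now apply shock_branch_pos | now apply shock_branch_le].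
    + now apply rar_branch_cont.
    + solve_continuity.
      * lra.
      * apply continuity_pt_sqrt. rewrite Rminus_diag, Rdiv_0_l. lra.
    + now rewrite rar_branch_p0, Rminus_diag, Rdiv_0_l, sqrt_0.
  - apply (continuity_pt_locally_ext shock_branch _ (x - p0)); [lra | |].
    + intros y Hy. unfold Rdist in Hy. apply Rabs_def2 in Hy. symmetry. apply fk_gt. lra.
    + now apply shock_branch_cont.
Qed.

Lemma Rint_rar_to_p0_decr x y : 0 < x -> x < y <= p0 ->
  Rint (rar_integrand E rhat) y p0 < Rint (rar_integrand E rhat) x p0.
Proof.
  intros Hx Hxy. rewrite !Rint_rar_to_p0 by lra.
  apply Ropp_lt_contravar, fk_incr; lra.
Qed.

Lemma fk_lower p : 0 < p -> R_lt_ER (- fk_side p) (improper0 (rar_integrand E rhat) p0).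
Proof.
  intro Hp. assert (Hp0 := p0_pos).
  unfold improper0. destruct (excluded_middle_informative _) as [Hcv | _]; [| exact I].
  destruct (constructive_indefinite_description _ Hcv) as [L HL]. simpl.
  assert (HDL := lim_right0_decr_lt _ p0 Rint_rar_to_p0_decr L HL). cbv beta in HDL.
  destruct (Rle_or_lt p p0) as [Hle | Hgt].
  - specialize (HDL p ltac:(lra)). rewrite Rint_rar_to_p0 in HDL; lra.
  - specialize (HDL p0 ltac:(lra)). rewrite Rint_rar_to_p0, fk_le, rar_branch_p0 in HDL by lra.
    rewrite fk_gt by exact Hgt. generalize (shock_branch_pos p Hgt). lra.
Qed.

Lemma fk_inf M : R_lt_ER (- M) (improper0 (rar_integrand E rhat) p0) ->
  exists a, 0 < a /\ fk_side a < M.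
Proof.
  intro HM. assert (Hp0 := p0_pos).
  unfold improper0 in HM. destruct (excluded_middle_informative _) as [Hcv | Hncv].
  - destruct (constructive_indefinite_description _ Hcv) as [L HL]. simpl in HM.
    destruct (HL (L + M)) as [d [Hd Hdd]]; [lra|].
    set (a := Rmin d p0 / 2).
    assert (Hm1 := Rmin_l d p0). assert (Hm2 := Rmin_r d p0).
    assert (Hm0 : 0 < Rmin d p0) by (apply Rmin_pos; lra).
    exists a. split; [unfold a; lra|].
    specialize (Hdd a ltac:(unfold a; lra)).
    rewrite Rint_rar_to_p0 in Hdd by (unfold a; lra). apply Rabs_def2 in Hdd. lra.
  - apply NNPP. intro Hbounded. apply Hncv.
    apply (decr_bounded_lim_right0 _ p0 Rint_rar_to_p0_decr (- M) Hp0).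
    intros a Ha. rewrite Rint_rar_to_p0 by exact Ha.
    apply Rnot_lt_le. intro Hlt. apply Hbounded. exists a. split; lra.
Qed.

Lemma fk_wave_function : wave_function fk_side (improper0 (rar_integrand E rhat) p0).
Proof.
  split.
  - exact fk_incr.
  - exact fk_cont.
  - intro M. destruct (shock_branch_unbounded M) as [p [Hp HM]].
    exists p. rewrite fk_gt by exact Hp. split; [generalize p0_pos; lra | exact HM].
  - exact fk_lower.
  - exact fk_inf.
Qed.

End Side.

Lemma R_lt_ER_plus x y I J : R_lt_ER x I -> R_lt_ER y J -> R_lt_ER (x + y) (ER_plus I J).
Proof. destruct I, J; simpl; auto. intros; lra. Qed.

Lemma R_lt_ER_le x y I : x <= y -> R_lt_ER y I -> R_lt_ER x I.
Proof. destruct I; simpl; auto. intros; lra. Qed.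

Lemma R_lt_ER_plus_split u I J : R_lt_ER u (ER_plus I J) ->
  exists x y, R_lt_ER x I /\ R_lt_ER y J /\ u < x + y.
Proof.
  destruct I as [a|], J as [b|]; simpl; intro Hu.
  - exists (a - (a + b - u) / 4), (b - (a + b - u) / 4). simpl. lra.
  - exists (a - 1), (u - a + 2). simpl. repeat split; lra.
  - exists (u - b + 2), (b - 1). simpl. repeat split; lra.
  - exists u, 1. simpl. repeat split; lra.
Qed.

Lemma wave_incr_le h I : wave_function h I -> forall x y, 0 < x -> x <= y -> h x <= h y.
Proof.
  intros W x y Hx Hxy. destruct (Rle_lt_or_eq_dec _ _ Hxy) as [Hlt | <-]; [| lra].
  left. now apply (wave_incr _ _ W).
Qed.

Section TwoWaves.
Variables (hl hr : R -> R) (Il Ir : ERbar).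
Hypotheses (Wl : wave_function hl Il) (Wr : wave_function hr Ir).

Lemma wave_sum_neg_iff u :
  (exists a, 0 < a /\ hl a + hr a + u < 0) <-> R_lt_ER u (ER_plus Il Ir).
Proof.
  split.
  - intros [a [Ha Hneg]].
    apply (R_lt_ER_le _ (- hl a + - hr a)); [lra|].
    apply R_lt_ER_plus; [apply (wave_lower _ _ Wl) | apply (wave_lower _ _ Wr)]; exact Ha.
  - intro Hu. destruct (R_lt_ER_plus_split u Il Ir Hu) as [x [y [Hx [Hy Hxy]]]].
    destruct (wave_inf _ _ Wl (- x)) as [al [Hal Hhl]]; [now rewrite Ropp_involutive|].
    destruct (wave_inf _ _ Wr (- y)) as [ar [Har Hhr]]; [now rewrite Ropp_involutive|].
    assert (Ha : 0 < Rmin al ar) by (apply Rmin_pos; assumption).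
    exists (Rmin al ar). split; [exact Ha|].
    generalize (wave_incr_le _ _ Wl _ _ Ha (Rmin_l al ar))
               (wave_incr_le _ _ Wr _ _ Ha (Rmin_r al ar)). lra.
Qed.

Lemma wave_sum_root_iff u :
  (exists! p, 0 < p /\ hl p + hr p + u = 0) <-> (exists a, 0 < a /\ hl a + hr a + u < 0).
Proof.
  set (f := fun p => hl p + hr p + u).
  assert (Hincr : forall x y, 0 < x -> x < y -> f x < f y).
  { intros x y Hx Hxy. unfold f.
    generalize (wave_incr _ _ Wl x y Hx Hxy) (wave_incr _ _ Wr x y Hx Hxy). lra. }
  split.
  - intros [p [[Hp Hfp] _]]. exists (p / 2). split; [lra|].
    generalize (Hincr (p / 2) p ltac:(lra) ltac:(lra)). unfold f in *. lra.
  - intros [a [Ha Hfa]].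
    destruct (wave_unbounded _ _ Wl (- hr a - u)) as [pl [Hpl Hhl]].
    set (b := Rmax pl a + 1).
    assert (Hb1 : pl <= b) by (unfold b; generalize (Rmax_l pl a); lra).
    assert (Hb2 : a < b) by (unfold b; generalize (Rmax_r pl a); lra).
    assert (Hfb : 0 < f b).
    { unfold f. generalize (wave_incr_le _ _ Wl pl b Hpl Hb1) (wave_incr _ _ Wr a b Ha Hb2).
      lra. }
    destruct (IVT_open f a b 0 Hb2) as [z [Hz Hfz]]; [| split; [exact Hfa | exact Hfb] |].
    + intros x Hx. unfold f.
      assert (Hl := wave_cont _ _ Wl x ltac:(lra)). assert (Hr := wave_cont _ _ Wr x ltac:(lra)).
      solve_continuity.
    + exists z. split; [split; [lra | exact Hfz]|].
      intros z' [Hz' Hfz']. fold (f z') in Hfz'.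
      destruct (Rtotal_order z z') as [Hlt | [Heq | Hgt]]; [| exact Heq |].
      * generalize (Hincr z z' ltac:(lra) Hlt). lra.
      * generalize (Hincr z' z Hz' Hgt). lra.
Qed.

End TwoWaves.

Theorem theorem1
  (El Er : EOS)
  (rhol ul pl rhor ur pr : R)
  (rhomaxl rhomaxr : R)
  (rhoHl rhoHr rhatl rhatr : R -> R)
  (HEl : EOS_ok El) (HEr : EOS_ok Er)
  (Hl : side_ok El rhol pl rhomaxl rhoHl rhatl)
  (Hr : side_ok Er rhor pr rhomaxr rhoHr rhatr) :
  let f := fun p => fk El rhol pl rhoHl rhatl p + fk Er rhor pr rhoHr rhatr p
                    + ur - ul in
  let Il := improper0 (rar_integrand El rhatl) pl in
  let Ir := improper0 (rar_integrand Er rhatr) pr in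
  (exists! pstar, 0 < pstar /\ f pstar = 0) <-> R_lt_ER (ur - ul) (ER_plus Il Ir).
Proof.
  intros f Il Ir. unfold f, Il, Ir.
  assert (Wl := fk_wave_function El HEl rhol pl rhomaxl rhoHl rhatl Hl).
  assert (Wr := fk_wave_function Er HEr rhor pr rhomaxr rhoHr rhatr Hr).
  rewrite <- (wave_sum_neg_iff _ _ _ _ Wl Wr), <- (wave_sum_root_iff _ _ _ _ Wl Wr).
  split; intros [p [[Hp Hfp] Huniq]]; exists p;
    (split; [split; [exact Hp | lra] | intros q [Hq Hfq]; apply Huniq; split; [exact Hq | lra]]).
Qed.
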